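(* For any infinite graph $G$ it is possible to attach vertices to the edges of $G$ (i.e. subdivide edges by new vertices) to form a graph that is VEL-parabolic.
   Context: Graphs are simple, connected, locally finite. For an infinite graph with base vertex $v_0$, let $\Gamma_\infty$ be the family of infinite vertex paths (consecutive vertices adjacent or equal) from $v_0$ to infinity (visiting each vertex only finitely often). The graph is VEL-parabolic if $\sup_m(\inf_{\gamma\in\Gamma_\infty}\sum_{v\in\gamma}m(v))^2/\sum_v m(v)^2=\infty$, the supremum over vertex metrics $m:V\to[0,\infty)$ of finite non-zero area, and VEL-hyperbolic otherwise. *)

From HB Require Import structures.
From mathcomp Require Import all_boot all_order all_algebra.
From mathcomp Require Import all_classical all_reals.
From mathcomp Require Import ereal esum.
Set Implicit Arguments. Unset Strict Implicit. Unset Printing Implicit Defensive.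
Import Order.TTheory GRing.Theory Num.Theory.
Local Open Scope classical_set_scope.
Local Open Scope ring_scope.

Section Graphs.
Variable W : choiceType.

Definition simple_graph (S : set W) (adj : W -> W -> Prop) : Prop :=
  (forall u v, adj u v -> S u /\ S v) /\
  (forall u v, adj u v -> adj v u) /\
  (forall v, ~ adj v v).

Definition locally_finite (S : set W) (adj : W -> W -> Prop) : Prop :=
  forall v, S v -> finite_set [set u | adj v u].

Definition connected_graph (S : set W) (adj : W -> W -> Prop) : Prop :=
  forall u v, S u -> S v ->
    exists (n : nat) (p : nat -> W),
      p 0%N = u /\ p n = v /\ (forall i, (i < n)%N -> adj (p i) (p i.+1)).

Definition path_to_infinity (S : set W) (adj : W -> W -> Prop) (v0 : W)
    (g : nat -> W) : Prop :=
  g 0%N = v0 /\ (forall k, S (g k)) /\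
  (forall k, g k.+1 = g k \/ adj (g k) (g k.+1)) /\
  (forall w, finite_set [set k | g k = w]).

Variable R : realType.

Definition area (S : set W) (m : W -> R) : \bar R :=
  \esum_(v in S) ((m v) ^+ 2)%:E.

Definition mlength (m : W -> R) (g : nat -> W) : \bar R :=
  \esum_(v in range g) (m v)%:E.

Definition Gamma_inf (S : set W) adj v0 : set (nat -> W) :=
  [set g | path_to_infinity S adj v0 g].

Definition min_length (S : set W) adj v0 (m : W -> R) : \bar R :=
  ereal_inf [set mlength m g | g in Gamma_inf S adj v0].

Definition vertex_metric (S : set W) (m : W -> R) : Prop :=
  (forall v, 0 <= m v) /\ (0 < area S m)%E /\ (area S m < +oo)%E.

Definition VEL (S : set W) adj v0 : \bar R :=
  ereal_sup [set ((min_length S adj v0 m * min_length S adj v0 m)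
                  * ((fine (area S m))^-1)%:E)%E
            | m in [set m | vertex_metric S m]].

Definition VEL_parabolic (S : set W) adj : Prop :=
  forall v0, S v0 -> VEL S adj v0 = +oo%E.

End Graphs.

(** D is an orientation of the edges (exactly one of D u v, D v u for each
    edge) and n u v is the number of new vertices placed on the edge
    oriented from u to v.  New vertices are inr (u, v, i), 1 <= i <= n u v,
    and the edge u--v becomes the path
      inl u, inr (u,v,1), ..., inr (u,v,n u v), inl v. *)
Section Subdivision.
Variables (V : choiceType) (adj : V -> V -> Prop)
          (D : V -> V -> Prop) (n : V -> V -> nat).

Definition sub_vertex := (V + (V * V * nat))%type.

Definition is_orientation : Prop :=
  forall u v, adj u v -> (D u v <-> ~ D v u).

Definition sub_set : set sub_vertex := fun x =>
  match x with
  | inl _ => True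
  | inr (u, v, i) => adj u v /\ D u v /\ (1 <= i)%N /\ (i <= n u v)%N
  end.

Definition sub_point (u v : V) (i : nat) : sub_vertex :=
  if i == 0%N then inl u
  else if (i <= n u v)%N then inr (u, v, i) else inl v.

Definition sub_adj (x y : sub_vertex) : Prop :=
  exists u v i, adj u v /\ D u v /\ (i <= n u v)%N /\
    ((x = sub_point u v i /\ y = sub_point u v i.+1) \/
     (y = sub_point u v i /\ x = sub_point u v i.+1)).

End Subdivision.

(* Number the vertices (a connected, locally finite graph is countable), orient every edge
   towards its larger number and subdivide the edge e by n_e = 2^(c e) new vertices, c an
   injective code of edges.  Weigh each new vertex of e by 1/(8 n_e) and the old vertices
   by 0.  Between two consecutive visits to old vertices a walk stays inside one subdivided
   edge, so a path to infinity, which must meet infinitely many old vertices, traverses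
   infinitely many edges completely; each contributes 1/8 to its length, which is therefore
   infinite.  The area is the sum over edges of n_e / (8 n_e)^2 = 1 / (64 n_e), finite since
   the n_e are distinct powers of 2. *)

From HB Require Import structures.
From mathcomp Require Import all_boot all_order all_algebra.
From mathcomp Require Import all_classical all_reals.
From mathcomp Require Import ereal esum.
From mathcomp Require Import zify ring lra.
Local Open Scope classical_set_scope.
Local Open Scope ring_scope.
Set Implicit Arguments. Unset Strict Implicit. Unset Printing Implicit Defensive.
Import Order.TTheory GRing.Theory Num.Theory.

Lemma finite_nat_ub (A : set nat) : finite_set A -> exists T, forall k, A k -> (k < T)%N.
Proof.
move=> /finite_seqP[s ->]; exists (\max_(k <- s) k).+1 => k /= ks.
by rewrite ltnS; apply: leq_bigmax_seq.
Qed.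

Lemma discrete_ivt (p : nat -> nat) a b : (a <= b)%N ->
  (forall j, (a <= j < b)%N -> p j.+1 <= (p j).+1 /\ p j <= (p j.+1).+1)%N ->
  forall i, (minn (p a) (p b) <= i <= maxn (p a) (p b))%N ->
  exists2 j, (a <= j <= b)%N & p j = i.
Proof.
elim: b => [|b IH] ab p_step i hi.
  by move: ab hi; rewrite leqn0 => /eqP-> ?; exists 0%N; lia.
have [eab|ab'] := eqVneq a b.+1; first by subst a; exists b.+1; lia.
have [hi'|hi'] := boolP (minn (p a) (p b) <= i <= maxn (p a) (p b))%N.
  have ab_le : (a <= b)%N by lia.
  have [j hj pj] := IH ab_le (fun j hj => p_step j ltac:(lia)) i hi'.
  by exists j; lia.
by exists b.+1; [lia | have := p_step b; lia].
Qed.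

Lemma ge_natr_pinfty (R : archiFieldType) (x : \bar R) :
  (forall N : nat, (N%:R%:E <= x)%E) -> x = +oo%E.
Proof.
case: x => [r||] // x_ub; last by have := x_ub 0%N.
have := x_ub (Num.Def.truncn r).+1; rewrite lee_fin => r_ge.
by have := truncnS_gt r; rewrite ltNge r_ge.
Qed.

Lemma fsum_inv_consecutive_le1 (R : realFieldType) (A : set nat) : finite_set A ->
  (\sum_(j \in A) ((j.+1 * j.+2)%:R^-1 : R)%:E <= 1)%E.
Proof.
move=> /[dup] finA /finite_nat_ub[M M_ub].
apply: (@le_trans _ _ (\sum_(j \in `I_M) ((j.+1 * j.+2)%:R^-1 : R)%:E)%E).
  apply: lee_fsum_nneg_subset finA (finite_II M) _ _.
    by move=> j; rewrite !inE => /M_ub.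
  by move=> j _; rewrite lee_fin invr_ge0.
rewrite -fsbig_ord sumEFin lee_fin -(big_mkord xpredT (fun j => ((j.+1 * j.+2)%:R)^-1 : R)%R).
rewrite (@telescope_sumr_eq _ 0 M (fun j : nat => - (j.+1%:R : R)^-1)) //.
  by rewrite opprK addrC invr1 lerBlDr lerDl invr_ge0.
move=> j _; rewrite natrM opprK addrC; field.
have j_ge0 : (0 <= j%:R :> R) by [].
by apply/andP; split; apply/eqP; lra.
Qed.

Lemma pow2_add_inj a b i j : (i < 2 ^ a)%N -> (j < 2 ^ b)%N ->
  (2 ^ a + i = 2 ^ b + j)%N -> a = b.
Proof.
have lt_pow2 c d : (c < d)%N -> (2 ^ c.+1 <= 2 ^ d)%N by move=> cd; rewrite leq_pexp2l.
move=> ia jb e; have := lt_pow2 a b; have := lt_pow2 b a; rewrite !expnS.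
by case: (ltngtP a b); lia.
Qed.

Definition is_inl (A B : Type) (x : A + B) : bool := if x is inl _ then true else false.

Section SubdivisionWalks.
Variables (V : choiceType) (adj D : V -> V -> Prop) (n : V -> V -> nat).
Hypothesis n_gt0 : forall u v, (0 < n u v)%N.

Local Notation sadj := (sub_adj adj D n).
Local Notation spt := (sub_point n).

Lemma sub_point_inr u v i e : spt u v i = inr e -> e = (u, v, i) /\ (0 < i <= n u v)%N.
Proof.
rewrite /sub_point; case: eqP => // /eqP i0; case: ifP => // iv [<-].
by rewrite lt0n i0.
Qed.

Lemma sub_point_inl u v i x : spt u v i = inl x ->
  (i = 0%N /\ x = u) \/ (n u v < i)%N /\ x = v.
Proof.
rewrite /sub_point; case: eqP => [-> [<-]|_]; first by left.
by case: ifP => // /negbT; rewrite -ltnNge => ? [<-]; right.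
Qed.

Lemma sub_adj_sym x y : sadj x y -> sadj y x.
Proof.
move=> [u [v [i [uv [Duv [iv xy]]]]]]; exists u, v, i.
by do 3 split => //; case: xy; [right|left].
Qed.

Lemma sub_adj_inl_inl x y : ~ sadj (inl x) (inl y).
Proof.
have no_step u v i a b : (i <= n u v)%N -> spt u v i = inl a -> spt u v i.+1 = inl b -> False.
  move=> iv /sub_point_inl[] [hi _] /sub_point_inl[] [hi' _]; have := n_gt0 u v; lia.
move=> [u [v [i [_ [_ [iv [[xi yi]|[yi xi]]]]]]]].
  exact: (no_step u v i x y).
exact: (no_step u v i y x).
Qed.

Lemma sub_adj_inr u v i y : sadj (inr (u, v, i)) y ->
  (0 < i <= n u v)%N /\ (y = spt u v i.-1 \/ y = spt u v i.+1).
Proof.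
move=> [u' [v' [k [_ [_ [_ [[xk yk]|[yk xk]]]]]]]].
  have [[-> -> ->] hk] := sub_point_inr (esym xk).
  by rewrite yk; split=> //; right.
have [[-> -> ->] hk] := sub_point_inr (esym xk).
by rewrite yk; split=> //; left.
Qed.

Lemma sub_adj_inr_inr u v i e : sadj (inr (u, v, i)) (inr e) ->
  exists2 j, e = (u, v, j) & (j = i.+1 \/ i = j.+1).
Proof.
move=> /sub_adj_inr[hi [/esym|/esym] /sub_point_inr[-> _]].
  by exists i.-1 => //; right; lia.
by exists i.+1; [|left].
Qed.

Lemma sub_adj_inr_inl u v i x : sadj (inr (u, v, i)) (inl x) ->
  (x = u /\ i = 1%N) \/ (x = v /\ i = n u v).
Proof.
move=> /sub_adj_inr[hi [/esym|/esym] /sub_point_inl[] [hi' ->]];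
  first [by left; split; [|lia] | by right; split; [|lia] | lia].
Qed.

Definition edge_interior (e : V * V) : set (sub_vertex V) :=
  [set inr (e.1, e.2, i.+1) | i in `I_(n e.1 e.2)].

Lemma finite_edge_interior e : finite_set (edge_interior e).
Proof. exact/finite_image/finite_II. Qed.

Definition sub_index (x : sub_vertex V) : nat := if x is inr (_, _, i) then i else 0.

Section Walk.
Variable g : nat -> sub_vertex V.
Hypothesis g_step : forall k, g k.+1 = g k \/ sadj (g k) (g k.+1).

Definition traversed (e : V * V) : Prop := edge_interior e `<=` range g.

Lemma walk_stays_on_edge s t u v i : g s = inr (u, v, i) ->
    (forall j, (s <= j <= t)%N -> ~~ is_inl (g j)) ->
  forall j, (s <= j <= t)%N -> exists k, g j = inr (u, v, k).
Proof.
move=> gs g_inr; elim=> [|j IH] hj.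
  have s0 : s = 0%N by lia.
  by subst s; exists i.
have [<-|sj] := eqVneq s j.+1; first by exists i.
have [k gj] := IH ltac:(lia).
case: (g_step j) => [->|]; first by exists k.
case E : (g j.+1) => [x|e]; first by have := g_inr j.+1 hj; rewrite E.
by rewrite gj => /sub_adj_inr_inr[k' -> _]; exists k'.
Qed.

Lemma walk_on_edge_covers a b u v : (a <= b)%N ->
    (forall j, (a <= j <= b)%N -> exists k, g j = inr (u, v, k)) ->
  forall i, (minn (sub_index (g a)) (sub_index (g b)) <= i <=
             maxn (sub_index (g a)) (sub_index (g b)))%N ->
  range g (inr (u, v, i)).
Proof.
move=> ab on_edge i hi.
have index_step j : (a <= j < b)%N -> (sub_index (g j.+1) <= (sub_index (g j)).+1 /\
                                      sub_index (g j) <= (sub_index (g j.+1)).+1)%N.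
  move=> hj; have [k gj] := on_edge j ltac:(lia); have [k' gj'] := on_edge j.+1 ltac:(lia).
  case: (g_step j) => [->|]; first lia.
  by rewrite gj gj' /= => /sub_adj_inr_inr[j' [->] [->|->]]; lia.
have [j hj gj] := discrete_ivt ab index_step hi.
have [k gk] := on_edge j hj; exists j => //.
by rewrite gk -gj gk.
Qed.

(* Between [s] and [t] the walk stays inside one subdivided edge and its index moves by at
   most one per step; entering at one end and leaving at the other, it meets every index. *)
Lemma walk_crosses_edge s t x y : (s < t)%N -> g s = inl y -> g t = inl x -> x <> y ->
    (forall j, (s < j < t)%N -> ~~ is_inl (g j)) ->
  exists2 e, traversed e & e = (x, y) \/ e = (y, x).
Proof.
move=> st gs gt xy g_inr.
have st1 : (s.+1 < t)%N.
  rewrite ltn_neqAle st andbT; apply/eqP => ts; subst t.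
  case: (g_step s); rewrite gs gt; [by move=> [/xy] | exact: sub_adj_inl_inl].
case E : (g s.+1) => [z|[[u v] i0]]; first by have /negP[] := g_inr s.+1 ltac:(lia); rewrite E.
have on_edge : forall j, (s.+1 <= j <= t.-1)%N -> exists k, g j = inr (u, v, k).
  by apply: walk_stays_on_edge E _ => j hj; apply: g_inr; lia.
have [q Eq] := on_edge t.-1 ltac:(lia).
have start : (y = u /\ i0 = 1%N) \/ (y = v /\ i0 = n u v).
  by case: (g_step s); rewrite gs E // => /sub_adj_sym /sub_adj_inr_inl.
have finish : (x = u /\ q = 1%N) \/ (x = v /\ q = n u v).
  by case: (g_step t.-1); rewrite prednK ?Eq ?gt; try lia; move=> // /sub_adj_inr_inl.
have cover := walk_on_edge_covers (ltac:(lia) : (s.+1 <= t.-1)%N) on_edge.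
rewrite E Eq /= in cover.
have ends : [/\ y = u, x = v, i0 = 1%N & q = n u v] \/ [/\ y = v, x = u, i0 = n u v & q = 1%N].
  case: start => -[? ?]; case: finish => -[? ?]; subst;
  first [by left | by right | by case: xy].
exists (u, v).
  move=> _ [i /= iv <-]; apply: cover.
  by case: ends => -[_ _ -> ->]; lia.
by case: ends => -[-> -> _ _]; auto.
Qed.

Hypothesis g_in : forall k, sub_set adj D n (g k).
Hypothesis g_fin : forall w, finite_set [set k | g k = w].

Lemma walk_inl_infinite : infinite_set [set k | is_inl (g k)].
Proof.
move=> /finite_nat_ub[T T_ub].
have g_inr j : (T <= j)%N -> ~~ is_inl (g j).
  by apply: contraTN => /T_ub; rewrite ltnNge.
case E : (g T) => [x|[[u v] i]]; first by have := g_inr T (leqnn T); rewrite E.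
apply: (@infinite_setD _ setT `I_T infinite_nat (finite_II T)).
apply: (@sub_finite_set _ _ (\bigcup_(k in `I_(n u v).+1) [set j | g j = inr (u, v, k)])).
  move=> t [_ /negP]; rewrite -leqNgt => Tt.
  have T_inr j : (T <= j <= t)%N -> ~~ is_inl (g j) by move=> /andP[/g_inr].
  have [k gt] : exists k, g t = inr (u, v, k) by apply: (walk_stays_on_edge E T_inr); lia.
  exists k; last by [].
  by have := g_in t; rewrite gt => -[_ [_ [_ kn]]]; rewrite /= ltnS.
by apply: bigcup_finite => // k _; exact: g_fin.
Qed.

Lemma walk_inl_range_infinite : infinite_set [set x | range g (inl x)].
Proof.
move=> fin_vis; apply: walk_inl_infinite.
pose visits x := [set k | g k = inl x].
apply: (@sub_finite_set _ _ (\bigcup_(x in [set x | range g (inl x)]) visits x)).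
  by move=> k; rewrite /=; case E : (g k) => [x|] // _; exists x => //; exists k.
by apply: bigcup_finite => // x _; exact: g_fin.
Qed.

Lemma walk_first_visit_traversed s t x : (s < t)%N -> is_inl (g s) -> g t = inl x ->
    (forall k, g k = inl x -> (t <= k)%N) ->
  exists2 e, traversed e & x = e.1 \/ x = e.2.
Proof.
move=> st s_inl gt t_first.
have inl_before : exists k, is_inl (g k) && (k < t)%N by exists s; rewrite s_inl st.
have before_ub k : is_inl (g k) && (k < t)%N -> (k <= t)%N by move=> /andP[_ /ltnW].
have [r /andP[r_inl rt] r_max] := ex_maxnP inl_before before_ub.
case Er : (g r) r_inl => [y|//] _.
have xy : x <> y by move=> exy; have := t_first r; rewrite Er exy leqNgt rt => /(_ erefl).
have between j : (r < j < t)%N -> ~~ is_inl (g j).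
  by move=> /andP[rj jt]; apply: contraTN rj => j_inl; rewrite -leqNgt r_max // j_inl.
have [e trav [exy|eyx]] := walk_crosses_edge rt Er gt xy between.
  by exists e; [|left; rewrite exy].
by exists e; [|right; rewrite eyx].
Qed.

(* Every visited old vertex other than the first one is reached, at its first visit, through a
   completely traversed edge. *)
Lemma walk_traversed_infinite : infinite_set [set e | traversed e].
Proof.
move=> fin_trav.
have [k0 k0_inl k0_min] := ex_minnP (infinite_setN0 walk_inl_infinite).
case E0 : (g k0) (k0_inl) => [x0|//] _.
apply: walk_inl_range_infinite.
pose ends := fst @` [set e | traversed e] `|` snd @` [set e | traversed e].
apply: (@sub_finite_set _ _ (x0 |` ends)); last first.
  by rewrite finite_setU; split => //; rewrite finite_setU; split; exact: finite_image.
move=> x [t _ gt]; have [->|xx0] := eqVneq x x0; [by left | right].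
have [t0 /eqP gt0 t0_min] := ex_minnP (ex_intro (fun k => g k == inl x) t (introT eqP gt)).
have k0t0 : (k0 < t0)%N.
  rewrite ltn_neqAle k0_min ?gt0 // andbT; apply: contraNneq xx0 => k0t0.
  by move: gt0; rewrite -k0t0 E0 => -[->].
have t0_first k : g k = inl x -> (t0 <= k)%N by move=> /eqP; apply: t0_min.
have [e trav [->|->]] := walk_first_visit_traversed k0t0 k0_inl gt0 t0_first.
  by left; exists e.
by right; exists e.
Qed.

End Walk.
End SubdivisionWalks.

Section SubdivisionMetric.
Variables (R : realType) (V : choiceType) (adj D : V -> V -> Prop) (code : V -> nat).
Hypothesis code_inj : injective code.

Definition subdiv_len (u v : V) : nat := 2 ^ pickle (code u, code v).

Definition subdiv_metric (x : sub_vertex V) : R :=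
  if x is inr (u, v, _) then ((8 * subdiv_len u v)%:R)^-1 else 0.

Local Notation S := (sub_set adj D subdiv_len).
Local Notation sadj := (sub_adj adj D subdiv_len).

Lemma subdiv_len_gt0 u v : (0 < subdiv_len u v)%N.
Proof. by rewrite expn_gt0. Qed.

Lemma subdiv_metric_ge0 x : 0 <= subdiv_metric x.
Proof. by case: x => [//|[[u v] i]]; rewrite /= invr_ge0. Qed.

(* The new vertices of an edge with [subdiv_len = 2^c] get odd keys in [2^(c+1), 2^(c+2)),
   so distinct edges get disjoint blocks, and the squared weights are dominated by the
   telescoping terms 1/((k+1)(k+2)). *)
Definition area_key (x : sub_vertex V) : nat :=
  match x with
  | inl y => 2 * code y
  | inr (u, v, i) => (2 * (subdiv_len u v + i.-1)).+1
  end.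

Lemma area_key_inj : {in S &, injective area_key}.
Proof.
move=> [x|[[u v] i]] [y|[[u' v'] i']]; rewrite !inE /=; try lia.
  by move=> _ _ e; congr inl; apply: code_inj; lia.
move=> [_ [_ hi]] [_ [_ hi']] e.
have /(pcan_inj pickleK)[/code_inj eu /code_inj ev] :
    pickle (code u, code v) = pickle (code u', code v').
  by apply: (@pow2_add_inj _ _ i.-1 i'.-1); move: hi hi' e; rewrite /subdiv_len; lia.
by subst u' v'; congr inr; congr (_, _); lia.
Qed.

Lemma subdiv_metric_sq_le x : S x ->
  subdiv_metric x ^+ 2 <= (((area_key x).+1 * (area_key x).+2)%:R)^-1.
Proof.
case: x => [y _|[[u v] i] [_ [_ hi]]]; first by rewrite /= expr0n invr_ge0.
have n_gt0 := subdiv_len_gt0 u v.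
rewrite /= exprVn -natrX lef_pV2 ?inE ?unitfE ?pnatr_eq0 ?posrE ?ltr0n ?expn_gt0 ?muln_gt0 //.
  by rewrite ler_nat; move: hi n_gt0; set N := subdiv_len u v; nia.
by rewrite n_gt0.
Qed.

Lemma area_subdiv_metric_le1 : (area S subdiv_metric <= 1)%E.
Proof.
apply: ge_ereal_sup => _ [X [finX XS] <-].
pose h (j : nat) : R := ((j.+1 * j.+2)%:R)^-1.
apply: (@le_trans _ _ (\sum_(x \in X) (h (area_key x))%:E)%E).
  by apply: lee_fsum => // x Xx; rewrite lee_fin; exact: subdiv_metric_sq_le (XS x Xx).
rewrite -(@fsbig_image _ _ _ _ _ X area_key (fun j => (h j)%:E)); last first.
  by move=> x y /set_mem/XS Sx /set_mem/XS Sy; apply: area_key_inj; rewrite inE.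
exact/fsum_inv_consecutive_le1/finite_image.
Qed.

Lemma fsum_subdiv_metric_edge_interior e :
  (\sum_(x \in edge_interior subdiv_len e) (subdiv_metric x)%:E = (8^-1 : R)%:E)%E.
Proof.
rewrite fsbig_image; last by move=> i j _ _ [].
rewrite -fsbig_ord sumEFin sumr_const card_ord /= -mulr_natr natrM; congr (_%:E).
by field; rewrite pnatr_eq0 -lt0n subdiv_len_gt0.
Qed.

Lemma fsum_subdiv_metric_edges (s : seq (V * V)) : uniq s ->
  (\sum_(x \in \big[setU/set0]_(e <- s) edge_interior subdiv_len e) (subdiv_metric x)%:E
   = ((size s)%:R / 8 : R)%:E)%E.
Proof.
elim: s => [|e s IH] /=; first by rewrite big_nil fsbig_set0 mul0r.
move=> /andP[es us].
have fin_rest : finite_set (\big[setU/set0]_(e' <- s) edge_interior subdiv_len e').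
  by rewrite -bigcup_seq; apply: bigcup_finite => // e' _; exact: finite_edge_interior.
have disj : edge_interior subdiv_len e `&` \big[setU/set0]_(e' <- s) edge_interior subdiv_len e'
    `<=` set0.
  move=> _ [[i _ <-]]; rewrite -bigcup_seq => -[e' e's [j _ [e1 e2 _]]].
  by move: es; rewrite -(injective_projections _ _ e1 e2) e's.
rewrite big_cons fsbigU //; [|exact: finite_edge_interior|by move=> x /disj].
rewrite [LHS]/= fsum_subdiv_metric_edge_interior IH // -EFinD; congr (_%:E).
by rewrite -addn1 natrD; field.
Qed.

Lemma mlength_subdiv_metric g v0 : path_to_infinity S sadj v0 g ->
  mlength subdiv_metric g = +oo%E.
Proof.
move=> [_ [g_in [g_step g_fin]]].
have trav_inf := walk_traversed_infinite subdiv_len_gt0 g_step g_in g_fin.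
apply: ge_natr_pinfty => N.
have [B B_trav B_card] := infinite_set_fset (8 * N) trav_inf.
apply: esum_ge; exists (\big[setU/set0]_(e <- finmap.enum_fset B) edge_interior subdiv_len e).
  rewrite -bigcup_fset; split; last by move=> x [e /B_trav]; apply.
  by apply: bigcup_finite => // e _; exact: finite_edge_interior.
rewrite fsum_subdiv_metric_edges ?finmap.fset_uniq // lee_fin ler_pdivlMr // -natrM ler_nat.
by rewrite mulnC.
Qed.

Lemma area_subdiv_metric_gt0 a b : adj a b -> D a b -> (0 < area S subdiv_metric)%E.
Proof.
move=> ab Dab; pose x : sub_vertex V := inr (a, b, 1%N).
have Sx : S x by do 3 split => //; exact: subdiv_len_gt0.
apply: (@lt_le_trans _ _ ((subdiv_metric x ^+ 2)%:E)).
  by rewrite lte_fin exprn_gt0 // invr_gt0 ltr0n muln_gt0 subdiv_len_gt0.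
by apply: esum_ge; exists [set x]; [split=> // y -> | rewrite fsbig_set1].
Qed.

Lemma subdiv_VEL_parabolic : (exists a b, adj a b /\ D a b) -> VEL_parabolic R S sadj.
Proof.
move=> [a [b [ab Dab]]] v0 _.
have area_gt0 := area_subdiv_metric_gt0 ab Dab.
have area_fin : (area S subdiv_metric < +oo)%E.
  exact: le_lt_trans area_subdiv_metric_le1 (ltry _).
have len_inf : min_length S sadj v0 subdiv_metric = +oo%E.
  by apply/ereal_inf_pinfty => _ [g g_path <-]; exact: mlength_subdiv_metric g_path.
apply/eqP; rewrite -leye_eq; apply: ereal_sup_ubound; exists subdiv_metric.
  by split; [exact: subdiv_metric_ge0 | split].
rewrite len_inf mulyy gt0_mulye // lte_fin invr_gt0 fine_gt0 //.
by rewrite area_gt0 area_fin.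
Qed.
End SubdivisionMetric.

Section ConnectedGraphs.
Variables (W : choiceType) (adj : W -> W -> Prop).
Hypothesis conn : connected_graph [set: W] adj.

Lemma countable_connected_locally_finite :
  locally_finite [set: W] adj -> countable [set: W].
Proof.
move=> lf; have [[a _]|no_vertex] := pselect (exists a : W, True); last first.
  by rewrite (_ : [set: W] = set0) ?countable0 //; apply/seteqP; split=> // x; case: no_vertex.
pose fix ball k : set W :=
  if k is k'.+1 then ball k' `|` \bigcup_(x in ball k') [set u | adj x u] else [set a].
have ball_fin k : finite_set (ball k).
  elim: k => [|k IH] /=; first exact: finite_set1.
  by rewrite finite_setU; split => //; apply: bigcup_finite => // x _; exact: lf.
have path_ball v : exists k, ball k v.
  have [m [p [p0 [pm p_adj]]]] := @conn a v I I.
  suff: forall i, (i <= m)%N -> ball i (p i) by move=> /(_ m (leqnn m)); rewrite pm; exists m.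
  elim=> [|i IH] im /=; first by rewrite p0.
  by right; exists (p i); [apply: IH; lia | apply: p_adj].
rewrite (_ : [set: W] = \bigcup_k ball k); last first.
  by apply/seteqP; split => // v _; have [k ?] := path_ball v; exists k.
by apply: bigcup_countable => // k _; exact: finite_set_countable.
Qed.

Lemma infinite_connected_has_edge : infinite_set [set: W] -> exists a b, adj a b.
Proof.
move=> W_inf; have [a _] := infinite_setN0 W_inf.
have [b [_ /= ba]] := infinite_setN0 (infinite_setD W_inf (finite_set1 a)).
have [m [p [p0 [pm p_adj]]]] := @conn a b I I.
have m_gt0 : (0 < m)%N by rewrite lt0n; apply/eqP => m0; apply: ba; rewrite -pm m0 p0.
by exists (p 0%N), (p 1%N); exact: p_adj.
Qed.

End ConnectedGraphs.

Theorem mainTheorem8 (R : realType) (V : choiceType) (adj : V -> V -> Prop) :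
  simple_graph [set: V] adj ->
  connected_graph [set: V] adj ->
  locally_finite [set: V] adj ->
  infinite_set [set: V] ->
  exists (D : V -> V -> Prop) (n : V -> V -> nat),
    is_orientation adj D /\
    VEL_parabolic R (sub_set adj D n) (sub_adj adj D n).
Proof.
move=> [_ [adj_sym adj_irr]] conn lf V_inf.
have /countable_injP[code code_inj] := countable_connected_locally_finite conn lf.
have {}code_inj : injective code by move=> u v; apply: code_inj; rewrite inE.
have code_neq u v : adj u v -> code u <> code v.
  by move=> uv /code_inj eq_uv; apply: (adj_irr u); rewrite {2}eq_uv.
pose D u v := (code u < code v)%N.
have D_orient : is_orientation adj D by move=> u v /code_neq; rewrite /D; lia.
exists D, (subdiv_len code); split => //.
apply: subdiv_VEL_parabolic => //.
have [a [b ab]] := infinite_connected_has_edge conn V_inf.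
have [Dab|Dba] := boolP (D a b); first by exists a, b.
by exists b, a; split; [apply: adj_sym | have := code_neq a b ab; rewrite /D in Dba *; lia].
Qed.
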